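(* Let $K$ be a field of characteristic $p>0$ such that $K/k$ is a finitely generated field extension, where $k=\bigcap_{n\ge0}K^{p^n}$. There is a bijection between power towers on $K$ and $K$-subalgebras $\mathcal{D}$ with $K\subseteq\mathcal{D}\subseteq\operatorname{Diff}_k(K)$, given by $W_\bullet\mapsto\operatorname{Diff}_{W_\bullet}(K):=\bigcup_{n\ge0}\operatorname{Diff}_{W_n}(K)$, with inverse $\mathcal{D}\mapsto(W_n)_{n\ge 0}$, $W_n=\{x\in K: xE=Ex\ \forall E\in\mathcal{D}_n\}$, where $\mathcal{D}_n=\mathcal{D}\cap\operatorname{Diff}_{K^{p^n}}(K)$. Moreover, $\dim_K(\mathcal{D}_i)=\dim_{W_i}(K)$ for all $i\ge 0$.
   Context: A power tower on $K$ is a sequence of subfields $W_0,W_1,\ldots$ of $K$ with $W_j=W_i\cdot K^{p^j}$ whenever $j\le i$ ($\cdot$ = compositum in $K$). For subfields $A\subseteq B$, $\operatorname{Diff}_A(B)$ is the union over $n\ge0$ of the sets of $A$-linear maps $D:B\to B$ with $[b_0,[b_1,[\ldots,[b_n,D]\ldots]]]=0$ for all $b_i\in B$ (elements of $B$ acting by multiplication, $[X,Y]=XY-YX$); it is a subalgebra of $\operatorname{End}_A(B)$ containing $B$. *)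

From mathcomp Require Import all_boot all_algebra.
Set Implicit Arguments. Unset Strict Implicit. Unset Printing Implicit Defensive.
Import GRing.Theory.
Local Open Scope ring_scope.

Section PowerTowers.
Variable K : fieldType.

Definition is_subfield (S : K -> Prop) : Prop :=
  [/\ S 0, S 1,
      (forall x y, S x -> S y -> S (x - y)),
      (forall x y, S x -> S y -> S (x * y)) &
      (forall x, S x -> S x^-1)].

Definition gen_field (A : K -> Prop) : K -> Prop :=
  fun x => forall S, is_subfield S -> (forall y, A y -> S y) -> S x.

Definition compositum (A B : K -> Prop) : K -> Prop :=
  gen_field (fun y => A y \/ B y).

Definition Kpow (p n : nat) : K -> Prop :=
  fun x => exists y : K, x = y ^+ (p ^ n)%N.

Definition perfect_core (p : nat) : K -> Prop :=
  fun x => forall n, Kpow p n x.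

Definition fin_gen_over (A : K -> Prop) : Prop :=
  exists s : seq K, forall x, gen_field (fun y => A y \/ y \in s) x.

Definition power_tower (p : nat) (W : nat -> K -> Prop) : Prop :=
  (forall i, is_subfield (W i)) /\
  (forall i j, (j <= i)%N -> W j = compositum (W i) (Kpow p j)).

Definition commb (b : K) (D : K -> K) : K -> K := fun x => b * D x - D (b * x).

Fixpoint diff_order (n : nat) (D : K -> K) : Prop :=
  match n with
  | 0 => forall b x, commb b D x = 0
  | n'.+1 => forall b, diff_order n' (commb b D)
  end.

Definition A_linear (A : K -> Prop) (D : K -> K) : Prop :=
  (forall x y, D (x + y) = D x + D y) /\ (forall a x, A a -> D (a * x) = a * D x).

Definition Diff (A : K -> Prop) : (K -> K) -> Prop :=
  fun D => A_linear A D /\ exists n, diff_order n D.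

Definition Diff_tower (W : nat -> K -> Prop) : (K -> K) -> Prop :=
  fun D => exists n, Diff (W n) D.

Definition admissible_alg (p : nat) (D : (K -> K) -> Prop) : Prop :=
  [/\ (forall c : K, D (fun x => c * x)),
      (forall E F, D E -> D F -> D (fun x => E x + F x)),
      (forall E F, D E -> D F -> D (fun x => E (F x))),
      (forall (c : K) E, D E -> D (fun x => c * E x)) &
      (forall E, D E -> Diff (perfect_core p) E)].

Definition alg_level (p : nat) (D : (K -> K) -> Prop) (n : nat) : (K -> K) -> Prop :=
  fun E => D E /\ Diff (Kpow p n) E.

Definition tower_of_alg (p : nat) (D : (K -> K) -> Prop) : nat -> K -> Prop :=
  fun n x => forall E, alg_level p D n E -> forall y, x * E y = E (x * y).

Definition op_dim (S : (K -> K) -> Prop) (n : nat) : Prop :=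
  exists e : 'I_n -> (K -> K),
    [/\ (forall j, S (e j)),
        (forall c : 'I_n -> K,
            (forall x, \sum_(j < n) c j * e j x = 0) -> forall j, c j = 0) &
        (forall E, S E -> exists c : 'I_n -> K,
            forall x, E x = \sum_(j < n) c j * e j x)].

Definition field_dim (W : K -> Prop) (n : nat) : Prop :=
  exists e : 'I_n -> K,
    (forall c : 'I_n -> K, (forall j, W (c j)) ->
        \sum_(j < n) c j * e j = 0 -> forall j, c j = 0) /\
    (forall x, exists c : 'I_n -> K,
        (forall j, W (c j)) /\ x = \sum_(j < n) c j * e j).

End PowerTowers.

(* A differential operator of order m on K is K^(p^m)-linear, since in characteristic p
   the p-th iterate of ad c is ad (c^p).  Conversely K is finite over each K^(p^n)
   (monomials in generators of K/k with exponents below p^n span it), and then every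
   additive K^(p^n)-linear map has finite order: a long enough iterated commutator with
   elements of a finite spanning set repeats some element p^n times.  So Diff_A(K) is the
   algebra of additive maps that are A-linear and K^(p^n)-linear for some n, and the
   correspondence is the Jacobson-Bourbaki theorem applied level by level: an algebra of
   additive maps containing K is the algebra of all maps linear over its centralizer W
   once K is finite over W, and W is recovered as the centralizer of that algebra.  The
   coordinate functionals of a W-basis of K form a K-basis of D_i, whence the dimensions. *)

From mathcomp Require Import all_boot all_algebra.
From mathcomp Require Import ring zify.
From Stdlib Require Import FunctionalExtensionality PropExtensionality ClassicalEpsilon Classical.
Set Implicit Arguments. Unset Strict Implicit. Unset Printing Implicit Defensive.
Import GRing.Theory.
Local Open Scope ring_scope.

Section FieldBasics.
Variable K : fieldType.

Definition additive (E : K -> K) := forall x y, E (x + y) = E x + E y.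

Definition linear_over (A : K -> Prop) (E : K -> K) :=
  forall a x, A a -> E (a * x) = a * E x.

Section Additive.
Variable E : K -> K.
Hypothesis addE : additive E.

Lemma additive0 : E 0 = 0.
Proof. by apply: (addrI (E 0)); rewrite -addE !addr0. Qed.

Lemma additiveN x : E (- x) = - E x.
Proof. by apply/eqP; rewrite -subr_eq0 opprK -addE addNr additive0. Qed.

Lemma additiveB x y : E (x - y) = E x - E y.
Proof. by rewrite addE additiveN. Qed.

Lemma additive_sum (I : Type) (r : seq I) (F : I -> K) :
  E (\sum_(i <- r) F i) = \sum_(i <- r) E (F i).
Proof. exact: (big_morph E addE additive0). Qed.

End Additive.

Section Subfield.
Variable S : K -> Prop.
Hypothesis hS : is_subfield S.

Lemma subfield0 : S 0. Proof. by case: hS. Qed.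
Lemma subfield1 : S 1. Proof. by case: hS. Qed.
Lemma subfieldB x y : S x -> S y -> S (x - y). Proof. by case: hS => _ _ h _ _; apply: h. Qed.
Lemma subfieldM x y : S x -> S y -> S (x * y). Proof. by case: hS => _ _ _ h _; apply: h. Qed.
Lemma subfieldV x : S x -> S x^-1. Proof. by case: hS => _ _ _ _ h; apply: h. Qed.

Lemma subfieldN x : S x -> S (- x).
Proof. by move=> Sx; rewrite -sub0r; apply: subfieldB => //; apply: subfield0. Qed.

Lemma subfieldD x y : S x -> S y -> S (x + y).
Proof. by move=> Sx Sy; rewrite -[y]opprK; apply: subfieldB => //; apply: subfieldN. Qed.

Lemma subfield_sum (I : Type) (r : seq I) (P : pred I) (F : I -> K) :
  (forall i, P i -> S (F i)) -> S (\sum_(i <- r | P i) F i).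
Proof. by move=> SF; apply: (big_ind S) => //; [apply: subfield0 | apply: subfieldD]. Qed.

Lemma subfield_nat n : S n%:R.
Proof.
elim: n => [|n IHn]; first exact: subfield0.
by rewrite mulrS; apply: subfieldD => //; apply: subfield1.
Qed.

End Subfield.

Lemma gen_field_subfield (A : K -> Prop) : is_subfield (gen_field A).
Proof.
split=> [S hS _|S hS _|x y Ax Ay S hS hA|x y Ax Ay S hS hA|x Ax S hS hA].
- exact: subfield0.
- exact: subfield1.
- by apply: subfieldB => //; [apply: Ax | apply: Ay].
- by apply: subfieldM => //; [apply: Ax | apply: Ay].
- by apply: subfieldV => //; apply: Ax.
Qed.

Lemma gen_field_in (A : K -> Prop) x : A x -> gen_field A x.
Proof. by move=> Ax S _; apply. Qed.

Lemma gen_field_min (A S : K -> Prop) : is_subfield S -> (forall y, A y -> S y) ->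
  forall x, gen_field A x -> S x.
Proof. by move=> hS hA x; apply. Qed.

Lemma linear_scalars_subfield E : additive E ->
  is_subfield (fun a => forall x, E (a * x) = a * E x).
Proof.
move=> addE; split=> [x|x|a b Ea Eb x|a b Ea Eb x|a Ea x].
- by rewrite !mul0r additive0.
- by rewrite !mul1r.
- by rewrite !mulrBl additiveB // Ea Eb.
- by rewrite -!mulrA Ea Eb.
- have [->|a0] := eqVneq a 0; first by rewrite invr0 !mul0r additive0.
  by apply: (mulfI a0); rewrite -Ea !mulVKf.
Qed.

Lemma linear_over_gen_field (A : K -> Prop) E : additive E -> linear_over A E ->
  linear_over (gen_field A) E.
Proof.
by move=> addE linE a x /(gen_field_min (linear_scalars_subfield addE)); apply=> b /linE.
Qed.

Lemma linear_over_compositum (A B : K -> Prop) E : additive E ->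
  linear_over A E -> linear_over B E -> linear_over (compositum A B) E.
Proof.
by move=> addE linA linB; apply: linear_over_gen_field => // a x [/linA|/linB]; apply.
Qed.

Lemma linear_over_sub (A B : K -> Prop) E : (forall c, B c -> A c) ->
  linear_over A E -> linear_over B E.
Proof. by move=> BA linE a x /BA; apply: linE. Qed.

End FieldBasics.

Section ListSpan.
Variable K : fieldType.

Fixpoint lspan (W : K -> Prop) (l : seq K) (x : K) : Prop :=
  if l is a :: l' then exists c, W c /\ lspan W l' (x - c * a) else x = 0.

Variable W : K -> Prop.
Hypothesis hW : is_subfield W.

Lemma lspan0 l : lspan W l 0.
Proof.
by elim: l => [|a l IHl] //=; exists 0; rewrite mul0r subr0; split=> //; apply: subfield0.
Qed.

Lemma lspanD l x y : lspan W l x -> lspan W l y -> lspan W l (x + y).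
Proof.
elim: l x y => [|a l IHl] x y /=; first by move=> -> ->; rewrite addr0.
move=> [c [Wc sx]] [d [Wd sy]]; exists (c + d); split; first exact: subfieldD.
have -> : x + y - (c + d) * a = (x - c * a) + (y - d * a) by ring.
exact: IHl.
Qed.

Lemma lspanZ l c x : W c -> lspan W l x -> lspan W l (c * x).
Proof.
move=> Wc; elim: l x => [|a l IHl] x /=; first by move=> ->; rewrite mulr0.
move=> [d [Wd sx]]; exists (c * d); split; first exact: subfieldM.
by rewrite -mulrA -mulrBr; apply: IHl.
Qed.

Lemma lspanB l x y : lspan W l x -> lspan W l y -> lspan W l (x - y).
Proof.
move=> sx sy; apply: lspanD => //; rewrite -mulN1r; apply: lspanZ => //.
by apply: subfieldN => //; apply: subfield1.
Qed.

Lemma lspan_sum l (I : eqType) (r : seq I) (F : I -> K) :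
  (forall i, i \in r -> lspan W l (F i)) -> lspan W l (\sum_(i <- r) F i).
Proof.
by move=> sF; rewrite big_seq; apply: (big_ind (lspan W l)); [apply: lspan0 | apply: lspanD |].
Qed.

Lemma lspan_cons a l x : lspan W l x -> lspan W (a :: l) x.
Proof. by exists 0; rewrite mul0r subr0; split=> //; apply: subfield0. Qed.

Lemma lspan_mem l a : a \in l -> lspan W l a.
Proof.
elim: l => [|b l IHl] //; rewrite inE => /predU1P [->|/IHl]; last exact: lspan_cons.
by exists 1; rewrite mul1r subrr; split; [apply: subfield1 | apply: lspan0].
Qed.

Lemma lspan_sub l m x : {subset l <= m} -> lspan W l x -> lspan W m x.
Proof.
move=> lm; elim: l x lm => [|a l IHl] x lm /=; first by move=> ->; apply: lspan0.
move=> [c [Wc sx]]; rewrite -(subrK (c * a) x); apply: lspanD.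
  by apply: IHl sx => b bl; apply: lm; rewrite inE bl orbT.
by apply: lspanZ => //; apply: lspan_mem; apply: lm; rewrite inE eqxx.
Qed.

Lemma lspan_cat l1 l2 x : lspan W (l1 ++ l2) x <->
  exists x1 x2, [/\ lspan W l1 x1, lspan W l2 x2 & x = x1 + x2].
Proof.
split=> [|[x1 [x2 [s1 s2 ->]]]]; last first.
  by apply: lspanD; [apply: lspan_sub s1 | apply: lspan_sub s2] => z zl; rewrite mem_cat zl ?orbT.
elim: l1 x => [|a l1 IHl] x /=; first by exists 0, x; rewrite add0r.
move=> [c [Wc /IHl [x1 [x2 [s1 s2 e]]]]]; exists (x1 + c * a), x2; split.
- by exists c; rewrite addrK.
- by [].
- by rewrite addrAC -e subrK.
Qed.

Lemma lspan_map b l x : lspan W [seq b * y | y <- l] x <-> exists2 y, lspan W l y & x = b * y.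
Proof.
split=> [|[y sy ->]].
  elim: l x => [|a l IHl] x /=; first by move=> ->; exists 0; rewrite ?mulr0.
  move=> [c [Wc /IHl [y sy e]]]; exists (y + c * a); first by exists c; rewrite addrK.
  by rewrite mulrDr -e mulrCA subrK.
elim: l y sy => [|a l IHl] y /=; first by move=> ->; rewrite mulr0.
by move=> [c [Wc /IHl sy]]; exists c; rewrite mulrCA -mulrBr.
Qed.

Lemma lspan_flatten a L (r : seq nat) x : uniq r ->
  lspan W (flatten [seq [seq a ^+ i * y | y <- L] | i <- r]) x <->
  exists2 v : nat -> K, (forall i, lspan W L (v i)) & x = \sum_(i <- r) a ^+ i * v i.
Proof.
elim: r x => [|i r IHr] x /=.
  split=> [->|[v _ ->]]; last by rewrite big_nil.
  by exists (fun=> 0) => [i|]; rewrite ?big_nil //; apply: lspan0.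
move=> /andP [ir ur]; rewrite lspan_cat; split.
  move=> [x1 [x2 [/lspan_map [y sy ->] /(IHr _ ur) [v sv ->] ->]]].
  exists (fun k => if k == i then y else v k) => [k|]; first by case: eqP.
  rewrite big_cons eqxx; congr (_ + _); apply: eq_big_seq => k kr.
  by case: eqP => // ki; move: ir; rewrite -ki kr.
move=> [v sv ->]; rewrite big_cons.
exists (a ^+ i * v i), (\sum_(j <- r) a ^+ j * v j); split=> //.
  by apply/lspan_map; exists (v i).
by apply/(IHr _ ur); exists v.
Qed.

End ListSpan.

Lemma lspan_subfield (K : fieldType) (W W' : K -> Prop) l x :
  (forall c, W c -> W' c) -> lspan W l x -> lspan W' l x.
Proof.
by move=> WW'; elim: l x => [|a l IHl] x //= [c [/WW' Wc /IHl]]; exists c.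
Qed.

Section Bases.
Variable K : fieldType.
Variable W : K -> Prop.
Hypothesis hW : is_subfield W.

Definition ispan n (e : 'I_n -> K) (x : K) :=
  exists c : 'I_n -> K, (forall j, W (c j)) /\ x = \sum_j c j * e j.

Definition ifree n (e : 'I_n -> K) :=
  forall c : 'I_n -> K, (forall j, W (c j)) -> \sum_j c j * e j = 0 -> forall j, c j = 0.

Definition ord_ext n (j : 'I_n) (v : K) (f : 'I_n.-1 -> K) : 'I_n -> K :=
  fun i => if unlift j i is Some k then f k else v.

Lemma ord_ext_id n (j : 'I_n) v f : ord_ext j v f j = v.
Proof. by rewrite /ord_ext unlift_none. Qed.

Lemma ord_ext_lift n (j : 'I_n) v f k : ord_ext j v f (lift j k) = f k.
Proof. by rewrite /ord_ext liftK. Qed.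

Lemma ord_ext_in n (j : 'I_n) v f : W v -> (forall k, W (f k)) -> forall i, W (ord_ext j v f i).
Proof. by move=> Wv Wf i; rewrite /ord_ext; case: unlift. Qed.

Lemma sum_ord_ext n (j : 'I_n) v f (e : 'I_n -> K) :
  \sum_i ord_ext j v f i * e i = v * e j + \sum_k f k * e (lift j k).
Proof. by rewrite (bigD1_ord j) //= ord_ext_id; under eq_bigr do rewrite ord_ext_lift. Qed.

Lemma ispan0 n (e : 'I_n -> K) : ispan e 0.
Proof.
exists (fun=> 0); split=> [j|]; first exact: subfield0.
by rewrite big1 // => j _; rewrite mul0r.
Qed.

Lemma ispanD n (e : 'I_n -> K) x y : ispan e x -> ispan e y -> ispan e (x + y).
Proof.
move=> [c [Wc ->]] [d [Wd ->]]; exists (fun j => c j + d j); split.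
  by move=> j; apply: subfieldD.
by rewrite -big_split; apply: eq_bigr => j _; rewrite mulrDl.
Qed.

Lemma ispanZ n (e : 'I_n -> K) a x : W a -> ispan e x -> ispan e (a * x).
Proof.
move=> Wa [c [Wc ->]]; exists (fun j => a * c j); split; first by move=> j; apply: subfieldM.
by rewrite mulr_sumr; apply: eq_bigr => j _; rewrite mulrA.
Qed.

Lemma ispan_ord0 n (e : 'I_n.+1 -> K) x :
  ispan e x <-> exists2 c0, W c0 & ispan (fun k => e (lift ord0 k)) (x - c0 * e ord0).
Proof.
split=> [[c [Wc ->]]|[c0 Wc0 [c [Wc ex]]]].
  exists (c ord0) => //; exists (fun k => c (lift ord0 k)); split=> //.
  by rewrite big_ord_recl addrC addKr.
exists (ord_ext ord0 c0 c); split; first exact: ord_ext_in.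
by rewrite sum_ord_ext -ex addrC subrK.
Qed.

Lemma ifree_not_span n (e : 'I_n -> K) j : ifree e -> ~ ispan (fun k => e (lift j k)) (e j).
Proof.
move=> free_e [c [Wc ej]].
have Wm1 : W (-1) by apply: subfieldN => //; apply: subfield1.
have := free_e (ord_ext j (-1) c) (ord_ext_in j Wm1 Wc).
rewrite sum_ord_ext -ej mulN1r addNr => /(_ erefl j) /eqP.
by rewrite ord_ext_id oppr_eq0 oner_eq0.
Qed.

Lemma ifree_ord0 n (e : 'I_n -> K) a : ifree e -> ~ ispan e a -> ifree (ord_ext ord0 a e).
Proof.
move=> free_e a_out c Wc; rewrite big_ord_recl ord_ext_id.
under eq_bigr do rewrite ord_ext_lift.
move=> sum0; have c0 : c ord0 = 0.
  apply/eqP; apply: contra_notT a_out => c0.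
  have -> : a = - (c ord0)^-1 * \sum_k c (lift ord0 k) * e k.
    by rewrite -[\sum_k _](addKr (c ord0 * a)) sum0 addr0 mulrN mulNr opprK mulKf.
  apply: ispanZ; first by apply: subfieldN => //; apply: subfieldV.
  by exists (fun k => c (lift ord0 k)).
move: sum0; rewrite c0 mul0r add0r => /free_e free_c j.
by case: (unliftP ord0 j) => [k ->|->] //; apply: free_c.
Qed.

Lemma exists_basis (l : seq K) : exists n (e : 'I_n -> K),
  ifree e /\ forall x, lspan W l x <-> ispan e x.
Proof.
elim: l => [|a l [n [e [free_e span_e]]]].
  exists 0%N, (fun=> 0); split=> [c _ _ []//|x].
  by split=> [->|[c [_ ->]]]; [apply: ispan0 | rewrite big_ord0].
have [a_in|a_out] := classic (ispan e a).
  exists n, e; split=> // x; split=> [[c [Wc /span_e sx]]|/span_e]; last exact: lspan_cons.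
  by rewrite -(subrK (c * a) x); apply: ispanD => //; apply: ispanZ.
exists n.+1, (ord_ext ord0 a e); split; first exact: ifree_ord0.
have e_lift : (fun k => ord_ext ord0 a e (lift ord0 k)) = e.
  by apply: functional_extensionality => k; rewrite ord_ext_lift.
move=> x; rewrite ispan_ord0 ord_ext_id e_lift.
by split=> [[c [Wc /span_e]]|[c Wc /span_e]]; [exists c | exists c].
Qed.

Section Coordinates.
Variables (n : nat) (e : 'I_n -> K).
Hypotheses (free_e : ifree e) (span_e : forall x, ispan e x).

Definition coord_in (j : 'I_n) (x : K) : K :=
  epsilon (inhabits (fun=> 0))
    (fun c : 'I_n -> K => (forall j, W (c j)) /\ x = \sum_j c j * e j) j.

Lemma coord_in_spec x : (forall j, W (coord_in j x)) /\ x = \sum_j coord_in j x * e j.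
Proof. exact: (epsilon_spec (inhabits (fun=> 0)) _ (span_e x)). Qed.

Lemma coord_inW j x : W (coord_in j x). Proof. by case: (coord_in_spec x). Qed.

Lemma coord_inE x : x = \sum_j coord_in j x * e j. Proof. by case: (coord_in_spec x). Qed.

Lemma coord_in_unique x (c : 'I_n -> K) : (forall j, W (c j)) -> x = \sum_j c j * e j ->
  forall j, coord_in j x = c j.
Proof.
move=> Wc ex j; apply/eqP; rewrite -subr_eq0; apply/eqP; move: j; apply: free_e.
  by move=> j; apply: subfieldB => //; apply: coord_inW.
by under eq_bigr do rewrite mulrBl; rewrite sumrB -coord_inE -ex subrr.
Qed.

Lemma coord_in_additive j : additive (coord_in j).
Proof.
move=> x y; apply: (coord_in_unique (c := fun i => coord_in i x + coord_in i y)).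
  by move=> i; apply: subfieldD => //; apply: coord_inW.
by under eq_bigr do rewrite mulrDl; rewrite big_split -!coord_inE.
Qed.

Lemma coord_in_linear j : linear_over W (coord_in j).
Proof.
move=> a x Wa; apply: (coord_in_unique (c := fun i => a * coord_in i x)).
  by move=> i; apply: subfieldM => //; apply: coord_inW.
by rewrite {1}(coord_inE x) mulr_sumr; under eq_bigr do rewrite mulrA.
Qed.

Lemma coord_in_basis j k : coord_in j (e k) = (k == j)%:R.
Proof.
apply: (coord_in_unique (c := fun i => (k == i)%:R)); first by move=> i; apply: subfield_nat.
rewrite (bigD1 k) //= eqxx mul1r big1 ?addr0 // => i ik.
by rewrite eq_sym (negbTE ik) mul0r.
Qed.

(* x = coord_in j x / coord_in j 1 for any j with coord_in j 1 != 0. *)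
Lemma coord_in_centralizer x : (forall j y, x * coord_in j y = coord_in j (x * y)) -> W x.
Proof.
move=> xc; have [j cj1] : exists j, coord_in j 1 != 0.
  apply: NNPP => no_j; move/eqP: (coord_inE 1); rewrite big1 ?oner_eq0 // => j _.
  by have [->|cj] := eqVneq (coord_in j 1) 0; [rewrite mul0r | case: no_j; exists j].
rewrite -[x](mulfK cj1) xc mulr1.
by apply: subfieldM => //; [apply: coord_inW | apply: subfieldV => //; apply: coord_inW].
Qed.

End Coordinates.

Lemma double_centralizer (l : seq K) x : (forall y, lspan W l y) ->
  (forall E, additive E -> linear_over W E -> forall y, x * E y = E (x * y)) -> W x.
Proof.
move=> span_l x_comm; have [n [e [free_e span_e]]] := exists_basis l.
have {}span_e y : ispan e y by apply/span_e; apply: span_l.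
apply: (coord_in_centralizer span_e) => j; apply: x_comm.
  exact: coord_in_additive.
exact: coord_in_linear.
Qed.

End Bases.

Section Dimension.
Variables (K : fieldType) (S : K -> Prop) (T : Type).
Hypothesis hS : is_subfield S.

Definition fspan m (f : 'I_m -> T -> K) (g : T -> K) :=
  exists a : 'I_m -> K, (forall j, S (a j)) /\ forall t, g t = \sum_j a j * f j t.

Definition ffree n (e : 'I_n -> T -> K) :=
  forall c : 'I_n -> K, (forall j, S (c j)) -> (forall t, \sum_j c j * e j t = 0) ->
  forall j, c j = 0.

(* The coefficient matrices of e in f and of f in e multiply to the identity. *)
Lemma ffree_size_le n m (e : 'I_n -> T -> K) (f : 'I_m -> T -> K) :
  ffree e -> (forall i, fspan f (e i)) -> (forall j, fspan e (f j)) -> (n <= m)%N.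
Proof.
move=> free_e /fin_all_exists [A eA] /fin_all_exists [B fB].
pose MA := \matrix_(i, j) A i j; pose MB := \matrix_(j, k) B j k.
suff MAB1 : MA *m MB = 1%:M.
  by rewrite -(mxrank1 K n) -MAB1; exact: leq_trans (mxrankM_maxl MA MB) (rank_leq_col MA).
apply/matrixP => i k; rewrite !mxE; under eq_bigr do rewrite !mxE.
apply/eqP; rewrite -subr_eq0; apply/eqP; move: k.
apply: free_e => [k|t].
  apply: (subfieldB hS); last exact: subfield_nat.
  apply: (subfield_sum hS) => j _.
  by apply: (subfieldM hS); [case: (eA i) | case: (fB j)].
have delta_i : \sum_k (i == k)%:R * e k t = e i t.
  rewrite (bigD1 i) //= eqxx mul1r big1 ?addr0 // => k ki.
  by rewrite eq_sym (negbTE ki) mul0r.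
under eq_bigr do rewrite mulrBl mulr_suml.
rewrite sumrB delta_i exchange_big /= (eA i).2; apply/eqP; rewrite subr_eq0; apply/eqP.
apply: eq_bigr => j _; rewrite (fB j).2 mulr_sumr.
by apply: eq_bigr => k _; rewrite mulrA.
Qed.

Lemma ffree_size_unique n m (e : 'I_n -> T -> K) (f : 'I_m -> T -> K) :
  ffree e -> ffree f -> (forall i, fspan f (e i)) -> (forall j, fspan e (f j)) -> n = m.
Proof.
move=> free_e free_f ef fe; apply/eqP.
by rewrite eqn_leq (ffree_size_le free_e ef fe) (ffree_size_le free_f fe ef).
Qed.

End Dimension.

Lemma op_dim_unique (K : fieldType) (S : (K -> K) -> Prop) n m :
  op_dim S n -> op_dim S m -> n = m.
Proof.
move=> [e [Se free_e span_e]] [f [Sf free_f span_f]].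
have hT : is_subfield (fun _ : K => True) by [].
apply: (ffree_size_unique hT (e := e) (f := f)) => [c _|c _|i|j].
- exact: free_e.
- exact: free_f.
- by have [a ea] := span_f _ (Se i); exists a.
- by have [a ea] := span_e _ (Sf j); exists a.
Qed.

Lemma field_dim_unique (K : fieldType) (W : K -> Prop) n m : is_subfield W ->
  field_dim W n -> field_dim W m -> n = m.
Proof.
move=> hW [e [free_e span_e]] [f [free_f span_f]].
apply: (ffree_size_unique hW (e := fun j (_ : unit) => e j) (f := fun j (_ : unit) => f j)).
- by move=> c Wc /(_ tt); apply: free_e.
- by move=> c Wc /(_ tt); apply: free_f.
- by move=> i; have [a [Wa ->]] := span_f (e i); exists a.
- by move=> j; have [a [Wa ->]] := span_e (f j); exists a.
Qed.

Section Commutators.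
Variable K : fieldType.
Implicit Types (a b t : K) (D E G : K -> K).

Local Notation zero := (fun _ : K => 0 : K).

Lemma commb_eq0 b D : (forall x, commb b D x = 0) <-> forall x, D (b * x) = b * D x.
Proof.
split=> [D0 x|linD x]; last by rewrite /commb linD subrr.
by apply/eqP; rewrite eq_sym -subr_eq0; apply/eqP; apply: D0.
Qed.

Lemma commb_additive b E : additive E -> additive (commb b E).
Proof. by move=> addE x y; rewrite /commb !(mulrDr, addE) opprD addrACA. Qed.

Lemma commb_linear_over (A : K -> Prop) b E : linear_over A E -> linear_over A (commb b E).
Proof. by move=> linE a x Aa; rewrite /commb (mulrCA b a x) !(linE a) //; ring. Qed.

Lemma commbC a b G : commb a (commb b G) = commb b (commb a G).
Proof. by apply: functional_extensionality => x; rewrite /commb mulrCA; ring. Qed.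

Lemma commb_zero b : commb b zero = zero.
Proof. by apply: functional_extensionality => x; rewrite /commb mulr0 subr0. Qed.

Lemma iter_commb_zero b m : iter m (commb b) zero = zero.
Proof. by elim: m => //= m ->; apply: commb_zero. Qed.

Lemma commb_iter a b m G : commb a (iter m (commb b) G) = iter m (commb b) (commb a G).
Proof. by elim: m => //= m <-; rewrite commbC. Qed.

Lemma diff_order_zero n : diff_order n zero.
Proof.
by elim: n => [|n IHn] /= b; [move=> x; rewrite /commb mulr0 subr0 | rewrite commb_zero].
Qed.

Lemma diff_orderD n D E : diff_order n D -> diff_order n E -> diff_order n (fun x => D x + E x).
Proof.
elim: n D E => [|n IHn] D E /= Dn En b.
  move=> x; move: (Dn b x) (En b x).
  by rewrite /commb mulrDr opprD addrACA => -> ->; rewrite addr0.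
have -> : commb b (fun x => D x + E x) = (fun x => commb b D x + commb b E x).
  by apply: functional_extensionality => x; rewrite /commb mulrDr opprD addrACA.
exact: IHn.
Qed.

Lemma diff_order_scale n c D : diff_order n D -> diff_order n (fun x => c * D x).
Proof.
elim: n D => [|n IHn] D /= Dn b.
  by move=> x; move: (Dn b x); rewrite /commb mulrCA -mulrBr => ->; rewrite mulr0.
have -> : commb b (fun x => c * D x) = (fun x => c * commb b D x).
  by apply: functional_extensionality => x; rewrite /commb mulrBr mulrCA.
exact: IHn.
Qed.

Lemma iter_commbE j t D x :
  iter j (commb t) D x =
  \sum_(0 <= i < j.+1) (-1) ^+ i * 'C(j, i)%:R * t ^+ (j - i) * D (t ^+ i * x).
Proof.
elim: j x => [|j IHj] x; first by rewrite big_nat1 !expr0 bin0 !mul1r.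
rewrite iterS {1}/commb !IHj.
set u := fun i => (-1) ^+ i.+1 * 'C(j, i.+1)%:R * t ^+ (j - i) * D (t ^+ i.+1 * x).
set h := fun i => (-1) ^+ i * 'C(j, i)%:R * t ^+ (j - i) * D (t ^+ i * (t * x)).
have expandR :
    \sum_(0 <= i < j.+2) (-1) ^+ i * 'C(j.+1, i)%:R * t ^+ (j.+1 - i) * D (t ^+ i * x)
    = t ^+ j.+1 * D x + \sum_(0 <= i < j.+1) (u i - h i).
  rewrite big_nat_recl // !expr0 bin0 subn0 !mul1r; congr (_ + _).
  apply: eq_big_nat => i _ /=; rewrite /u /h binS natrD subSS exprS [t ^+ i.+1]exprSr.
  by rewrite -(mulrA _ t x); ring.
have expandL :
    t * \sum_(0 <= i < j.+1) (-1) ^+ i * 'C(j, i)%:R * t ^+ (j - i) * D (t ^+ i * x)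
    = t ^+ j.+1 * D x + \sum_(0 <= i < j) u i.
  rewrite mulr_sumr big_nat_recl //; congr (_ + _).
    by rewrite !subn0 bin0 !expr0 !mul1r exprS; ring.
  apply: eq_big_nat => i /andP [_ ij]; rewrite /u subnS -[in RHS](@prednK (j - i)) ?subn_gt0 //.
  by rewrite [t ^+ (j - i).-1.+1]exprS; ring.
rewrite expandR sumrB [\sum_(0 <= i < j.+1) u i]big_nat_recr //= expandL addrA.
by rewrite {3}/u bin_small // mulr0 !mul0r addr0.
Qed.

End Commutators.

Lemma count_mem_le (T : eqType) (s w : seq T) k :
  (forall a, a \in s -> (count_mem a w <= k)%N) -> (count (mem s) w <= size s * k)%N.
Proof.
elim: s => [|a s IHs] cnt; first by rewrite (eq_count (a2 := pred0)) ?count_pred0.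
have -> : count (mem (a :: s)) w = count (predU (pred1 a) (mem s)) w.
  by apply: eq_count => x; rewrite inE.
rewrite mulSn; apply: leq_trans (leq_addr (count (predI (pred1 a) (mem s)) w) _) _.
rewrite count_predUI leq_add ?cnt ?mem_head // IHs // => b bs.
by apply: cnt; rewrite inE bs orbT.
Qed.

Lemma count_mem_pigeonhole (T : eqType) (s w : seq T) k : all (mem s) w ->
  (size s * k < size w)%N -> exists2 a, a \in s & (k < count_mem a w)%N.
Proof.
rewrite all_count => /eqP <- lt_sk_w; apply: NNPP => no_a.
suff : (count (mem s) w <= size s * k)%N by rewrite leqNgt lt_sk_w.
by apply: count_mem_le => a a_s; rewrite leqNgt; apply/negP => lt_k; apply: no_a; exists a.
Qed.

Section Words.
Variable K : fieldType.
Variable F : K -> Prop.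
Implicit Types (a b : K) (G : K -> K) (w : seq K).

Definition commw w G : K -> K := foldr (@commb K) G w.

Lemma commw_linear_over (A : K -> Prop) w G : linear_over A G -> linear_over A (commw w G).
Proof. by move=> linG; elim: w => //= a w; apply: commb_linear_over. Qed.

Lemma commw_count a w G :
  commw w G = iter (count_mem a w) (commb a) (commw [seq b <- w | b != a] G).
Proof.
by elim: w => //= b w ->; case: eqVneq => [->|_] //=; rewrite commb_iter.
Qed.

Lemma commb_lspan_ind G l (P : (K -> K) -> Prop) : additive G -> linear_over F G ->
  P (fun=> 0) -> (forall H1 H2, P H1 -> P H2 -> P (fun x => H1 x + H2 x)) ->
  (forall c H, F c -> P H -> P (fun x => c * H x)) ->
  (forall a, a \in l -> P (commb a G)) -> forall b, lspan F l b -> P (commb b G).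
Proof.
move=> addG linG P0 PD PZ Pl; elim: l Pl => [|a l IHl] Pl b /=.
  move=> ->; have -> : commb 0 G = (fun=> 0).
    by apply: functional_extensionality => x; rewrite /commb !mul0r additive0 ?subrr.
  exact: P0.
move=> [c [Fc lb]].
have -> : commb b G = (fun x => commb (b - c * a) G x + c * commb a G x).
  apply: functional_extensionality => x; rewrite /commb.
  have -> : (b - c * a) * x = b * x - c * (a * x) by ring.
  by rewrite additiveB // (linG c) //; ring.
apply: PD; first by apply: IHl => // z zl; apply: Pl; rewrite inE zl orbT.
by apply: PZ => //; apply: Pl; rewrite mem_head.
Qed.

Variable s : seq K.
Hypothesis span_s : forall x, lspan F s x.

(* b |-> [b, G] is F-linear, so it suffices to commute with the elements of s. *)
Lemma diff_order_of_words M G : additive G -> linear_over F G ->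
  (forall w, size w = M.+1 -> all (mem s) w -> forall x, commw w G x = 0) -> diff_order M G.
Proof.
elim: M G => [|M IHM] G addG linG words0 b.
  apply: (commb_lspan_ind (P := fun H => forall x, H x = 0)) => //.
  - by move=> H1 H2 H1_0 H2_0 x; rewrite H1_0 H2_0 addr0.
  - by move=> c H _ H0 x; rewrite H0 mulr0.
  - by move=> a a_s; apply: (words0 [:: a]); rewrite //= a_s.
apply: (commb_lspan_ind (P := diff_order M)) => // [|H1 H2|c H _|a a_s].
- exact: diff_order_zero.
- exact: diff_orderD.
- exact: diff_order_scale.
apply: IHM; [exact: commb_additive | exact: commb_linear_over | move=> w sw ws x].
have := words0 (rcons w a); rewrite /commw foldr_rcons; apply; first by rewrite size_rcons sw.
by rewrite all_rcons ws andbT; exact: a_s.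
Qed.

End Words.

Section Monomials.
Variables (K : fieldType) (F : K -> Prop) (q : nat).
Hypotheses (hF : is_subfield F) (q_gt0 : (0 < q)%N) (F_pow : forall a, F (a ^+ q)).
Implicit Types (t : seq K).

Fixpoint monomials (t : seq K) : seq K :=
  if t is a :: t' then flatten [seq [seq a ^+ i * y | y <- monomials t'] | i <- iota 0 q]
  else [:: 1].

Local Notation V t := (lspan F (monomials t)).

Lemma monomials_cons a t k u : (k < q)%N -> V t u -> V (a :: t) (a ^+ k * u).
Proof.
move=> kq tu; apply: (lspan_sub hF (l := [seq a ^+ k * y | y <- monomials t])).
  move=> z zk /=; apply/flattenP; exists [seq a ^+ k * y | y <- monomials t] => //.
  by apply/mapP; exists k; rewrite ?mem_iota.
by apply/lspan_map; exists u.
Qed.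

Lemma monomials_scalar t c : F c -> V t c.
Proof.
elim: t c => [|a t IHt] c Fc /=; first by exists c; rewrite mulr1 subrr.
by rewrite -[c]mul1r -(expr0 a); apply: monomials_cons => //; apply: IHt.
Qed.

(* Exponents reaching q are reduced using a ^+ q \in F. *)
Lemma monomialsM t x y : V t x -> V t y -> V t (x * y).
Proof.
elim: t x y => [|a t IHt] x y.
  move=> [c [Fc /= /eqP]]; rewrite mulr1 subr_eq0 => /eqP ->.
  move=> [d [Fd /= /eqP]]; rewrite mulr1 subr_eq0 => /eqP ->.
  by exists (c * d); rewrite mulr1 subrr; split=> //; apply: subfieldM.
move=> /(lspan_flatten hF _ _ _ (iota_uniq 0 q)) [v tv ->].
move=> /(lspan_flatten hF _ _ _ (iota_uniq 0 q)) [w tw ->].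
rewrite mulr_suml; apply: lspan_sum => // i; rewrite mem_iota add0n => /andP [_ iq].
rewrite mulr_sumr; apply: lspan_sum => // j; rewrite mem_iota add0n => /andP [_ jq].
rewrite mulrACA -exprD; have [ijq|qij] := ltnP (i + j) q.
  by apply: monomials_cons => //; apply: IHt.
rewrite -(subnK qij) exprD -mulrA; apply: monomials_cons; first by lia.
by apply: lspanZ => //; apply: IHt.
Qed.

(* x^-1 = (x^-1)^q * x^(q-1), where (x^-1)^q lies in F. *)
Lemma monomials_subfield t : is_subfield (V t).
Proof.
split=> [|||x y|x tx]; [exact: lspan0 hF _ | exact: monomials_scalar (subfield1 hF) |
  by move=> x y; apply: lspanB | exact: monomialsM |].
have [->|x0] := eqVneq x 0; first by rewrite invr0; apply: lspan0.
have -> : x^-1 = x^-1 ^+ q * x ^+ q.-1.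
  have xq : x ^+ q = x * x ^+ q.-1 by rewrite -exprS prednK.
  by rewrite exprVn xq invfM -mulrA mulVf ?mulr1 // expf_neq0.
apply: monomialsM; first exact: monomials_scalar.
elim: q.-1 => [|k IHk]; first exact: monomials_scalar (subfield1 hF).
by rewrite exprS; apply: monomialsM.
Qed.

Lemma monomials_mem t a : a \in t -> V t a.
Proof.
elim: t => [|b t IHt] //; rewrite inE => /predU1P [->|/IHt ta]; last first.
  by rewrite -[a]mul1r -(expr0 b); apply: monomials_cons.
have [q1|q_gt1] := leqP q 1.
  have q1' : q = 1%N by apply/eqP; rewrite eqn_leq q1.
  by apply: monomials_scalar; have := F_pow b; rewrite q1' expr1.
have := monomials_cons b (k := 1%N) q_gt1 (monomials_scalar t (subfield1 hF)).
by rewrite expr1 mulr1.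
Qed.

End Monomials.

Section PositiveCharacteristic.
Variables (K : fieldType) (p : nat).
Hypothesis hp : p \in [pchar K].
Implicit Types (a t : K) (D : K -> K).

Local Notation Kp n := (@Kpow K p n).
Local Notation zero := (fun _ : K => 0 : K).

Lemma pchar_prime : prime p. Proof. exact: pcharf_prime hp. Qed.

Lemma expn_pchar_gt0 n : (0 < p ^ n)%N. Proof. by rewrite expn_gt0 prime_gt0 ?pchar_prime. Qed.

Lemma Kpow_subfield n : is_subfield (Kp n).
Proof.
have pn : [pchar K].-nat (p ^ n)%N by rewrite pnatX pnatE ?pchar_prime ?hp ?orbT.
split=> [||_ _ [x ->] [y ->]|_ _ [x ->] [y ->]|_ [x ->]].
- by exists 0; rewrite expr0n eqn0Ngt expn_pchar_gt0.
- by exists 1; rewrite expr1n.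
- by exists (x - y); rewrite exprDn_pchar // exprNn_pchar.
- by exists (x * y); rewrite exprMn.
- by exists x^-1; rewrite exprVn.
Qed.

Lemma Kpow_pow n a : Kp n (a ^+ (p ^ n)). Proof. by exists a. Qed.

Lemma Kpow_le m n x : (m <= n)%N -> Kp n x -> Kp m x.
Proof. by move=> mn [y ->]; exists (y ^+ (p ^ (n - m))); rewrite -exprM -expnD subnK. Qed.

Lemma iter_commb_pchar t D : iter p (commb t) D = commb (t ^+ p) D.
Proof.
have p_gt0 := prime_gt0 pchar_prime.
apply: functional_extensionality => x.
rewrite iter_commbE big_nat_recr //= subnn expr0 binn big_ltn // subn0 bin0 !expr0 !mul1r.
have -> : (-1) ^+ p = - 1 :> K by rewrite exprNn_pchar ?pnatE ?pchar_prime // expr1n.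
rewrite big1_seq => [|i]; first by rewrite addr0 !mulr1 mulN1r.
rewrite mem_iota subnKC // => ip.
have /eqP -> : 'C(p, i)%:R == 0 :> K by rewrite -(dvdn_pcharf hp) prime_dvd_bin ?pchar_prime.
by rewrite mulr0 !mul0r.
Qed.

Lemma iter_commb_expn n t D : iter (p ^ n) (commb t) D = commb (t ^+ (p ^ n)) D.
Proof.
elim: n t D => [|n IHn] t D; first by rewrite expn0 expr1.
have iter_p : iter p (commb t) = commb (t ^+ p).
  by apply: functional_extensionality => G; apply: iter_commb_pchar.
by rewrite expnSr iterM iter_p IHn -exprM mulnC.
Qed.

(* If [b, D] is K^(p^m)-linear for every b, then [c, D] commutes with K for c in K^(p^m),
   so (ad c)^p D = [c^p, D] vanishes. *)
Lemma diff_order_linear m D : diff_order m D -> linear_over (Kp m) D.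
Proof.
elim: m D => [|m IHm] D /= Dm _ x [y ->].
  by rewrite expn0 expr1; exact: (commb_eq0 y D).1 (Dm y) x.
rewrite expnSr exprM; set c := y ^+ (p ^ m).
suff D_lin z : commb (c ^+ p) D z = 0 by exact: (commb_eq0 _ D).1 D_lin x.
have commb_cD b : commb b (commb c D) = zero.
  rewrite commbC; apply: functional_extensionality => u.
  by apply: (commb_eq0 c _).2 => v; apply: IHm (Dm b) _ _ (Kpow_pow m y).
have p_gt1 := prime_gt1 pchar_prime.
by rewrite -iter_commb_pchar -(subnKC p_gt1) iterSr iterSr commb_cD iter_commb_zero.
Qed.

(* A word of length > size s * (p^n - 1) over s contains some a at least p^n times;
   moving these to the front produces ad (a^(p^n)), which kills K^(p^n)-linear maps. *)
Lemma linear_diff_order n (s : seq K) D : (forall x, lspan (Kp n) s x) ->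
  additive D -> linear_over (Kp n) D -> diff_order (size s * (p ^ n).-1) D.
Proof.
move=> span_s addD linD.
apply: (diff_order_of_words span_s) => // w sw ws x.
have long_w : (size s * (p ^ n).-1 < size w)%N by rewrite sw.
have [a _] := count_mem_pigeonhole ws long_w.
rewrite (prednK (expn_pchar_gt0 n)) => q_le_cnt.
rewrite (commw_count a) -(subnK q_le_cnt) iterD iter_commb_expn.
have -> : commb (a ^+ (p ^ n)) (commw [seq b <- w | b != a] D) = zero.
  apply: functional_extensionality; apply: (commb_eq0 _ _).2 => u.
  by apply: commw_linear_over linD _ _ (Kpow_pow n a).
by rewrite iter_commb_zero.
Qed.

Lemma fin_gen_lspan_Kpow n : fin_gen_over (@perfect_core K p) ->
  exists l, forall x, lspan (Kp n) l x.
Proof.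
move=> [s gen_s]; exists (monomials (p ^ n) s) => x.
have [hF q_gt0] := (Kpow_subfield n, expn_pchar_gt0 n).
apply: (gen_field_min (monomials_subfield hF q_gt0 (Kpow_pow n) s) _ (gen_s x)) => y [ky|ys].
  exact: monomials_scalar hF q_gt0 _ _ (ky n).
exact: monomials_mem hF q_gt0 (Kpow_pow n) _ _ ys.
Qed.

End PositiveCharacteristic.

Section JacobsonBourbaki.
Variable K : fieldType.
Variable A : (K -> K) -> Prop.
Hypotheses (A_additive : forall E, A E -> additive E) (A_mul : forall c, A (fun x => c * x))
  (A_add : forall E F, A E -> A F -> A (fun x => E x + F x))
  (A_comp : forall E F, A E -> A F -> A (fun x => E (F x))).

Definition centralizer (c : K) : Prop := forall E, A E -> forall y, c * E y = E (c * y).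

Lemma centralizer_subfield : is_subfield centralizer.
Proof.
rewrite /centralizer.
split=> [E AE y|E AE y|a b ca cb E AE y|a b ca cb E AE y|a ca E AE y].
- by rewrite !mul0r (additive0 (A_additive AE)).
- by rewrite !mul1r.
- by rewrite !mulrBl (additiveB (A_additive AE)) (ca E) // (cb E).
- by rewrite -!mulrA (cb E) // (ca E).
- have [->|a0] := eqVneq a 0; first by rewrite invr0 !mul0r (additive0 (A_additive AE)).
  by apply: (mulfI a0); rewrite (ca E) // !mulVKf.
Qed.

Lemma A_scale c E : A E -> A (fun x => c * E x).
Proof. exact: A_comp (A_mul c). Qed.

Lemma A_sum m (G : 'I_m -> K -> K) : (forall j, A (G j)) -> A (fun x => \sum_j G j x).
Proof.
elim: m G => [|m IHm] G AG.
  by have := A_mul 0; congr A; apply: functional_extensionality => x; rewrite big_ord0 mul0r.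
have -> : (fun x => \sum_(j < m.+1) G j x) =
          (fun x => \sum_(j < m) G (lift ord0 j) x + G ord0 x).
  by apply: functional_extensionality => x; rewrite big_ord_recl addrC.
by apply: A_add => //; apply: IHm.
Qed.

Section Step.
Variables (n : nat) (e : 'I_n -> K) (v m : K).
Let kills (E : K -> K) := forall k, E (e k) = 0.
Hypothesis kill_m : forall E, A E -> kills E -> E v = 0 -> E m = 0.

(* If some E0 kills e but not v, then c = E0 m / E0 v works, because
   E - (E v / E0 v) E0 kills e and v. *)
Lemma density_step : exists2 c, centralizer c & forall E, A E -> kills E -> E (m - c * v) = 0.
Proof.
have [kill_v|not_kill_v] := classic (forall E, A E -> kills E -> E v = 0).
  exists 0; first exact: subfield0 centralizer_subfield.
  by move=> E AE kE; rewrite mul0r subr0 kill_m // kill_v.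
have [E0 [AE0 [kE0 E0v]]] : exists E0, A E0 /\ kills E0 /\ E0 v != 0.
  apply: NNPP => no_E0; apply: not_kill_v => E AE kE.
  by apply/eqP; apply: contra_notT no_E0 => Ev; exists E.
set c := E0 m / E0 v.
have Em E : A E -> kills E -> E m = c * E v.
  move=> AE kE; have AE' := A_add AE (A_scale (- (E v / E0 v)) AE0).
  have kE' : kills (fun x => E x + - (E v / E0 v) * E0 x).
    by move=> k; rewrite kE kE0 mulr0 addr0.
  have := kill_m AE' kE'; rewrite mulNr divfK // subrr => /(_ erefl) /eqP.
  by rewrite mulNr addr_eq0 opprK => /eqP ->; rewrite /c; ring.
have c_centr : centralizer c.
  move=> B AB y; have := Em _ (A_comp AB (A_scale (y / E0 v) AE0)).
  rewrite /= divfK // (_ : y / E0 v * E0 m = c * y); last by rewrite /c; ring.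
  by move=> -> // k; rewrite kE0 mulr0 (additive0 (A_additive AB)).
exists c => // E AE kE.
by rewrite (additiveB (A_additive AE)) -(c_centr E AE) Em // subrr.
Qed.
End Step.

Lemma density n (e : 'I_n -> K) m :
  (forall E, A E -> (forall j, E (e j) = 0) -> E m = 0) -> ispan centralizer e m.
Proof.
elim: n e m => [|n IHn] e m kill_m.
  have -> : m = 0 by rewrite -[m]mul1r; apply: kill_m (A_mul 1) _ => -[].
  exact: (ispan0 centralizer_subfield).
apply/ispan_ord0.
have [|c Cc kill_mc] := density_step (e := fun k => e (lift ord0 k)) (v := e ord0) (m := m).
  move=> E AE kE Ev; apply: kill_m => // j.
  by case: (unliftP ord0 j) => [k ->|->].
by exists c => //; apply: IHn => E AE kE; apply: kill_mc.
Qed.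

Lemma exists_dual_op n (e : 'I_n -> K) j : ifree centralizer e ->
  exists2 a, A a & forall k, a (e k) = (k == j)%:R.
Proof.
move=> free_e.
have [E1 [AE1 [kE1 E1j]]] :
    exists E1, A E1 /\ (forall k, E1 (e (lift j k)) = 0) /\ E1 (e j) != 0.
  apply: NNPP => no_E1; apply: (ifree_not_span centralizer_subfield free_e).
  apply: density => E AE kE.
  by apply/eqP; apply: contra_notT no_E1 => Ej; exists E.
exists (fun x => (E1 (e j))^-1 * E1 x) => [|k]; first exact: A_scale.
case: (unliftP j k) => [k' ->|->]; last by rewrite eqxx mulVf.
by rewrite kE1 mulr0 eq_sym (negbTE (neq_lift j k')).
Qed.

(* The dual operators a_j of a basis e over the centralizer are its coordinate
   functionals, so E = \sum_j E (e j) a_j lies in A. *)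
Lemma jacobson_bourbaki (F : K -> Prop) (l : seq K) :
  (forall c, F c -> centralizer c) -> (forall x, lspan F l x) ->
  forall E, additive E -> linear_over centralizer E -> A E.
Proof.
move=> FC span_l E addE linE; have hC := centralizer_subfield.
have [n [e [free_e span_e]]] := exists_basis hC l.
have {}span_e x : ispan centralizer e x by apply/span_e; apply: lspan_subfield FC (span_l x).
have /fin_all_exists2 [a Aa ae] := fun j => exists_dual_op j free_e.
have a_coord j x : a j x = coord_in centralizer e j x.
  rewrite {1}(coord_inE span_e x) (additive_sum (A_additive (Aa j))).
  under eq_bigr do rewrite -(coord_inW span_e) // ae.
  rewrite (bigD1 j) //= eqxx mulr1 big1 ?addr0 // => k kj.
  by rewrite (negbTE kj) mulr0.
have -> : E = fun x => \sum_j E (e j) * a j x.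
  apply: functional_extensionality => x; rewrite {1}(coord_inE span_e x) additive_sum //.
  by apply: eq_bigr => j _; rewrite a_coord [RHS]mulrC linE //; apply: coord_inW span_e _ _.
by apply: A_sum => j; apply: A_scale.
Qed.

End JacobsonBourbaki.

Section FinitelyGenerated.
Variables (K : fieldType) (p : nat).
Hypotheses (hp : p \in [pchar K]) (hfg : fin_gen_over (@perfect_core K p)).
Implicit Types (A B : K -> Prop) (E F : K -> K).

Local Notation Kp n := (@Kpow K p n).

Lemma DiffP A E :
  Diff A E <-> [/\ additive E, linear_over A E & exists n, linear_over (Kp n) E].
Proof.
split=> [[[addE linE] [m Em]]|[addE linE [n linE_n]]].
  by split=> //; exists m; apply: diff_order_linear hp _ _ Em.
split; first by split.
have [l span_l] := fin_gen_lspan_Kpow hp n hfg.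
by exists (size l * (p ^ n).-1)%N; exact: (linear_diff_order hp span_l addE linE_n).
Qed.

Lemma linear_over_Kpow_le m n E : (m <= n)%N -> linear_over (Kp m) E -> linear_over (Kp n) E.
Proof. by move=> mn; apply: linear_over_sub => c; apply: Kpow_le. Qed.

Lemma Diff_sub A B E : (forall c, B c -> A c) -> Diff A E -> Diff B E.
Proof.
by move=> BA /DiffP [addE linE fin]; apply/DiffP; split=> //; apply: linear_over_sub linE.
Qed.

Lemma Diff_mul A c : Diff A (fun x => c * x).
Proof.
apply/DiffP; split=> [x y|a x _|]; [by rewrite mulrDr | by rewrite mulrCA |].
by exists 0%N => a x _; rewrite mulrCA.
Qed.

Lemma Diff_add A E F : Diff A E -> Diff A F -> Diff A (fun x => E x + F x).
Proof.
move=> /DiffP [addE linE [m Em]] /DiffP [addF linF [n Fn]]; apply/DiffP; split.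
- by move=> x y; rewrite addE addF addrACA.
- by move=> a x Aa; rewrite linE // linF // mulrDr.
exists (maxn m n) => a x an.
rewrite (linear_over_Kpow_le (leq_maxl m n) Em) //.
by rewrite (linear_over_Kpow_le (leq_maxr m n) Fn) // mulrDr.
Qed.

Lemma Diff_comp A E F : Diff A E -> Diff A F -> Diff A (fun x => E (F x)).
Proof.
move=> /DiffP [addE linE [m Em]] /DiffP [addF linF [n Fn]]; apply/DiffP; split.
- by move=> x y; rewrite addF addE.
- by move=> a x Aa; rewrite linF // linE.
exists (maxn m n) => a x an.
by rewrite (linear_over_Kpow_le (leq_maxr m n) Fn) // (linear_over_Kpow_le (leq_maxl m n) Em).
Qed.

Lemma fin_gen_lspan C n : (forall c, Kp n c -> C c) -> exists l, forall x, lspan C l x.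
Proof.
move=> KC; have [l span_l] := fin_gen_lspan_Kpow hp n hfg.
by exists l => x; apply: lspan_subfield KC _.
Qed.

Section AlgebraToTower.
Variable D : (K -> K) -> Prop.
Hypothesis hD : admissible_alg p D.

Local Notation D_ n := (alg_level p D n).
Local Notation W := (tower_of_alg p D).

Lemma alg_level_additive n E : D_ n E -> additive E.
Proof. by case=> _ /DiffP []. Qed.

Lemma alg_level_mul n c : D_ n (fun x => c * x).
Proof. by split; [case: hD | apply: Diff_mul]. Qed.

Lemma alg_level_add n E F : D_ n E -> D_ n F -> D_ n (fun x => E x + F x).
Proof. by case: hD => _ DD _ _ _ [DE E_n] [DF F_n]; split; [apply: DD | apply: Diff_add]. Qed.

Lemma alg_level_comp n E F : D_ n E -> D_ n F -> D_ n (fun x => E (F x)).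
Proof. by case: hD => _ _ DC _ _ [DE E_n] [DF F_n]; split; [apply: DC | apply: Diff_comp]. Qed.

Lemma tower_of_alg_subfield n : is_subfield (W n).
Proof. exact: (centralizer_subfield (@alg_level_additive n)). Qed.

Lemma Kpow_tower_of_alg n c : Kp n c -> W n c.
Proof. by move=> Kc E [_ /DiffP [_ linE _]] y; rewrite linE. Qed.

Lemma tower_of_alg_le m n x : (m <= n)%N -> W n x -> W m x.
Proof.
by move=> mn Wx E [DE E_m] y; apply: Wx; split=> //; apply: Diff_sub E_m => c /Kpow_le; apply.
Qed.

Lemma alg_level_of_linear n E : additive E -> linear_over (W n) E -> D_ n E.
Proof.
move=> addE linE; have [l span_l] := fin_gen_lspan_Kpow hp n hfg.
apply: (jacobson_bourbaki (@alg_level_additive n) (@alg_level_mul n) (@alg_level_add n)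
  (@alg_level_comp n) (@Kpow_tower_of_alg n) span_l addE).
by move=> c x Wc; apply: linE.
Qed.

Lemma tower_of_alg_power_tower : power_tower p W.
Proof.
split=> [|i j ji]; first exact: tower_of_alg_subfield.
pose C := compositum (W i) (Kp j); have hC : is_subfield C := gen_field_subfield _.
have WC c : W i c -> C c by move=> Wc; apply: gen_field_in; left.
have KC c : Kp j c -> C c by move=> Kc; apply: gen_field_in; right.
apply: functional_extensionality => x; apply: propositional_extensionality; split=> [Wx|].
  have [l span_l] := fin_gen_lspan KC.
  apply: (double_centralizer hC span_l) => E addE linE; apply: Wx; split.
    by case: (alg_level_of_linear addE (linear_over_sub WC linE)).
  by apply/DiffP; split=> //; [|exists j]; apply: linear_over_sub linE.
apply: (gen_field_min (tower_of_alg_subfield j)) => y [Wy|Ky].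
  exact: tower_of_alg_le ji Wy.
exact: Kpow_tower_of_alg.
Qed.

Lemma Diff_tower_of_alg : Diff_tower W = D.
Proof.
apply: functional_extensionality => E; apply: propositional_extensionality.
split=> [[n /DiffP [addE linE [m _]]]|DE].
  have WW c : W (maxn n m) c -> W n c by apply: tower_of_alg_le; apply: leq_maxl.
  by case: (alg_level_of_linear addE (linear_over_sub WW linE)).
have [_ _ _ _ /(_ E DE) /DiffP [addE _ [m linE]]] := hD.
have DmE : D_ m E by split=> //; apply/DiffP; split=> //; exists m.
by exists m; apply/DiffP; split=> //; [move=> a x Wa; rewrite (Wa E) | exists m].
Qed.

(* The coordinate functionals of a basis of K over W i form a K-basis of D_ i. *)
Lemma alg_level_dim i n : op_dim (D_ i) n <-> field_dim (W i) n.
Proof.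
have hW := tower_of_alg_subfield i.
have [l span_l] := fin_gen_lspan (@Kpow_tower_of_alg i).
have [m [e [free_e span_e]]] := exists_basis hW l.
have {}span_e x : ispan (W i) e x by apply/span_e; apply: span_l.
have dimW : field_dim (W i) m by exists e.
have dimD : op_dim (D_ i) m.
  exists (coord_in (W i) e); split=> [j|c c0 j|E DE].
  - by apply: alg_level_of_linear; [apply: coord_in_additive | apply: coord_in_linear].
  - have := c0 (e j); rewrite (bigD1 j) //= coord_in_basis // eqxx mulr1.
    rewrite big1 ?addr0 // => k kj.
    by rewrite coord_in_basis // eq_sym (negbTE kj) mulr0.
  exists (fun j => E (e j)) => x.
  rewrite {1}(coord_inE span_e x) (additive_sum (alg_level_additive DE)).
  by apply: eq_bigr => j _; rewrite [RHS]mulrC (coord_inW span_e j x E DE).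
split=> [/op_dim_unique/(_ dimD) ->|/(field_dim_unique hW dimW) <-] //.
Qed.

End AlgebraToTower.

Section TowerToAlgebra.
Variable W : nat -> K -> Prop.
Hypothesis hW : power_tower p W.

Lemma power_tower_subfield n : is_subfield (W n).
Proof. by case: hW. Qed.

Lemma power_tower_compositum m n : (n <= m)%N -> W n = compositum (W m) (Kp n).
Proof. by case: hW => _; apply. Qed.

Lemma Kpow_power_tower n c : Kp n c -> W n c.
Proof. by move=> Kc; rewrite (power_tower_compositum (leqnn n)); apply: gen_field_in; right. Qed.

Lemma power_tower_le m n c : (m <= n)%N -> W n c -> W m c.
Proof. by move=> mn Wc; rewrite (power_tower_compositum mn); apply: gen_field_in; left. Qed.

Lemma Diff_tower_le m n E : (m <= n)%N -> Diff (W m) E -> Diff (W n) E.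
Proof. by move=> mn; apply: Diff_sub => c; apply: power_tower_le. Qed.

Lemma Diff_tower_admissible : admissible_alg p (Diff_tower W).
Proof.
split=> [c|E F [m Em] [n Fn]|E F [m Em] [n Fn]|c E [m Em]|E [m Em]].
- by exists 0%N; apply: Diff_mul.
- exists (maxn m n); apply: Diff_add.
    exact: Diff_tower_le (leq_maxl m n) Em.
  exact: Diff_tower_le (leq_maxr m n) Fn.
- exists (maxn m n); apply: Diff_comp.
    exact: Diff_tower_le (leq_maxl m n) Em.
  exact: Diff_tower_le (leq_maxr m n) Fn.
- by exists m; apply: Diff_comp (Diff_mul _ c) Em.
- by apply: Diff_sub Em => c core_c; apply: Kpow_power_tower; apply: core_c.
Qed.

Lemma tower_of_Diff_tower : tower_of_alg p (Diff_tower W) = W.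
Proof.
apply: functional_extensionality => n; apply: functional_extensionality => x.
apply: propositional_extensionality.
split=> [Wx|Wx E [[m /DiffP [addE linE _]] /DiffP [_ linE_n _]] y].
  have [l span_l] := fin_gen_lspan (@Kpow_power_tower n).
  apply: (double_centralizer (power_tower_subfield n) span_l) => E addE linE; apply: Wx.
  have linE_n : linear_over (Kp n) E by apply: linear_over_sub linE => c /Kpow_power_tower.
  by split; [exists n|]; apply/DiffP; split=> //; exists n.
symmetry; have [nm|mn] := leqP n m.
  by apply: (linear_over_compositum addE linE linE_n); rewrite -(power_tower_compositum nm).
by apply: linE; apply: power_tower_le (ltnW mn) Wx.
Qed.

End TowerToAlgebra.

End FinitelyGenerated.

Unset Implicit Arguments.
Theorem mainTheorem5 (K : fieldType) (p : nat) (hp : p \in [pchar K])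
    (hfg : fin_gen_over (@perfect_core K p)) :
  (forall W : nat -> K -> Prop, power_tower p W ->
     admissible_alg p (Diff_tower W) /\ tower_of_alg p (Diff_tower W) = W) /\
  (forall D : (K -> K) -> Prop, admissible_alg p D ->
     power_tower p (tower_of_alg p D) /\ Diff_tower (tower_of_alg p D) = D) /\
  (forall D : (K -> K) -> Prop, admissible_alg p D ->
     forall i n : nat,
       op_dim (alg_level p D i) n <-> field_dim (tower_of_alg p D i) n).
Proof.
split; first by move=> W hW; split; [exact: Diff_tower_admissible | exact: tower_of_Diff_tower].
split; first by move=> D hD; split; [exact: tower_of_alg_power_tower | exact: Diff_tower_of_alg].
by move=> D hD i n; apply: alg_level_dim.
Qed.
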